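(* (Intersection Indicium Magnification Theorem.) Let $K$ be a perfect field and let $K\subseteq L\subseteq M$ be finite extensions inside $\bar K$. Let $F/K$ be a finite Galois extension of degree $d$ such that $M'=MF$ is obtained by strong cluster magnification from $M/K$ through $F/K$ and $L'=LF$ is obtained by strong cluster magnification from $L/K$ through $F/K$. Then $\tau_K(M',L')=d\cdot\tau_K(M,L)$.
   Context: $\bar K$ is a fixed algebraic closure of $K$; $\tilde E$ denotes the Galois closure in $\bar K$ of a finite extension $E/K$. A finite extension $M/K$ is obtained by strong cluster magnification from a subextension $L/K$ through a finite Galois extension $F/K$ if $[L:K]>2$, $\tilde L\cap F=K$, and $LF=M$; $d=[F:K]$ is the magnification factor. For finite extensions $L/K$, $M/K$, let $L_1,\dots,L_a$ be all the distinct subfields of $M$ isomorphic to $L$ over $K$; the intersection indicium is $\tau_K(M,L)=[L_1\cap\cdots\cap L_a:K]$ if $a\ge 1$ and $\tau_K(M,L)=0$ if $a=0$. *)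

From HB Require Import structures.
From mathcomp Require Import all_boot all_order all_algebra all_field.
Set Implicit Arguments. Unset Strict Implicit. Unset Printing Implicit Defensive.
Import GRing.Theory.
Local Open Scope ring_scope.

Definition perfect_field (K : fieldType) : Prop :=
  forall p : nat, p \in [pchar K] -> forall x : K, exists y : K, y ^+ p = x.

Section Ambient.
Variables (K : fieldType) (Om : splittingFieldType K).
(* Om plays the role of (a finite normal part of) the algebraic closure of K;
   K itself is the subfield 1%AS of Om. *)

Definition isGalClosure (E G : {subfield Om}) : Prop :=
  [/\ galois 1%VS G, (E <= G)%VS &
      forall G' : {subfield Om}, galois 1%VS G' -> (E <= G')%VS -> (G <= G')%VS].

Definition strong_cluster_magnification (L F M : {subfield Om}) : Prop :=
  [/\ (2 < \dim L)%N, galois 1%VS F,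
      exists G, isGalClosure L G /\ (G :&: F)%VS = 1%VS
    & (L * F)%AS = M].

Definition iso_subfield (M L E : {subfield Om}) : Prop :=
  (E <= M)%VS /\ exists f : 'End(Om), kHom 1%VS L f /\ (f @: L)%VS = E.

Definition is_indicium (M L : {subfield Om}) (t : nat) : Prop :=
  ((forall E, ~ iso_subfield M L E) /\ t = 0%N) \/
  ((exists E, iso_subfield M L E) /\
   exists V : {vspace Om},
     (forall x, x \in V <-> forall E, iso_subfield M L E -> x \in E) /\
     t = \dim V).
End Ambient.

(** Let G be the Galois closure of M (which contains L) and let a be a
    primitive element of F.  Since F is normal and G :&: F = K, the minimal
    polynomial of a over G has its coefficients in G :&: F = K, so G and F are
    linearly disjoint: \dim (U * F) = \dim U * \dim F for every K-subspace U
    of G.  A dimension count then shows that U |-> U * F preserves inclusion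
    and intersections of subspaces of G.
    The subfields of M' isomorphic to L' are the s(L') = s(L) * F for the
    automorphisms s of \bar K with s(L) * F <= M * F, i.e. with s(L) <= M, so
    their intersection is (the intersection of the s(L) <= M) * F, whose
    dimension is \dim F times the indicium of (M, L). *)
From HB Require Import structures.
From mathcomp Require Import all_boot all_order all_algebra all_fingroup all_field.
Set Implicit Arguments. Unset Strict Implicit. Unset Printing Implicit Defensive.
Import GRing.Theory.

Local Open Scope ring_scope.

Lemma polyOver_capv (F0 : fieldType) (L0 : fieldExtType F0) (U V : {vspace L0})
    (p : {poly L0}) :
  p \is a polyOver U -> p \is a polyOver V -> p \is a polyOver (U :&: V)%VS.
Proof.
move=> /polyOverP pU /polyOverP pV; apply/polyOverP => i.
by rewrite memv_cap pU pV.
Qed.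

Section LinearlyDisjoint.

Variables (K : fieldType) (Om : splittingFieldType K) (G F : {subfield Om}).
Hypotheses (galF : galois 1 F) (capGF : (G :&: F)%VS = 1%VS).
Implicit Types U W : {vspace Om}.

Lemma minPoly_disjoint a : a \in F -> minPoly G a = minPoly 1 a.
Proof.
move=> Fa; have /and3P[_ _ /normalFieldP nF] := galF.
have [r /allP rF splitKa] := nF a Fa.
have /dvdp_prod_XsubC[m splitGa]: minPoly G a %| \prod_(b <- r) ('X - b%:P).
  by rewrite -splitKa minPolyS ?sub1v.
have pGa_F : minPoly G a \is a polyOver F.
  have -> : minPoly G a = \prod_(b <- mask m r) ('X - b%:P).
    by apply/eqP; rewrite -eqp_monic ?monic_prod_XsubC ?monic_minPoly.
  rewrite big_seq; apply: rpred_prod => b /mem_mask/rF Fb.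
  by rewrite rpredB ?polyOverX ?polyOverC.
have pGa_1 : minPoly G a \is a polyOver 1%VS.
  by rewrite -capGF polyOver_capv ?minPolyOver.
apply/eqP; rewrite -eqp_monic ?monic_minPoly //; apply/andP; split.
  by rewrite minPolyS ?sub1v.
by rewrite minPoly_dvdp ?root_minPoly.
Qed.

Lemma dim_prodv_disjoint_field : \dim (G * F) = (\dim G * \dim F)%N.
Proof.
apply/eqP; rewrite eqn_leq dim_prodv /=.
have /and3P[sKF sepF _] := galF.
set a := separable_generator 1 F.
have defF := eq_adjoin_separable_generator sepF sKF.
have Fa : a \in F := separable_generator_mem F 1.
have degGa : adjoin_degree G a = \dim F.
  rewrite defF dim_Fadjoin dimv1 muln1.
  by apply: succn_inj; rewrite -!size_minPoly minPoly_disjoint.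
rewrite -degGa mulnC -dim_Fadjoin; apply: dimvS.
by apply/FadjoinP; rewrite field_subvMr (subvP (field_subvMl G F)).
Qed.

Lemma dim_prodv_disjoint U : (U <= G)%VS -> \dim (U * F) = (\dim U * \dim F)%N.
Proof.
move=> sUG; set W := (G :\: U)%VS.
have defG : (W + U)%VS = G by rewrite addv_diff; apply/addv_idPl.
have dimG : (\dim W + \dim U)%N = \dim G.
  rewrite addnC -(dimv_cap_compl G U); congr (_ + _)%N.
  by rewrite capvC (capv_idPl sUG).
have [leWUF _] := dimv_add_leqif (W * F) (U * F).
have dimGF := dim_prodv_disjoint_field; rewrite -{1}defG prodvDl in dimGF.
apply/eqP; rewrite eqn_leq dim_prodv /=.
rewrite -(leq_add2l (\dim W * \dim F)) -mulnDl dimG -dimGF.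
by apply: leq_trans leWUF _; rewrite leq_add2r dim_prodv.
Qed.

Lemma prodv_capv_disjoint U W : (U <= G)%VS -> (W <= G)%VS ->
  ((U :&: W) * F)%VS = (U * F :&: W * F)%VS.
Proof.
move=> sUG sWG; apply/eqP; rewrite eqEdim subv_cap !prodvSl ?capvSl ?capvSr //=.
have sUWG : (U + W <= G)%VS by rewrite subv_add sUG.
have sUiWG : (U :&: W <= G)%VS := subv_trans (capvSl U W) sUG.
rewrite -(leq_add2l (\dim (U * F + W * F))) dimv_sum_cap -prodvDl.
by rewrite !dim_prodv_disjoint // -!mulnDl dimv_sum_cap.
Qed.

Lemma subv_prodv_disjoint U W : (U <= G)%VS -> (W <= G)%VS ->
  (U * F <= W * F)%VS = (U <= W)%VS.
Proof.
move=> sUG sWG; apply/idP/idP => [sUWF|]; last exact: prodvSl.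
have: ((U :&: W) * F)%VS = (U * F)%VS.
  by rewrite prodv_capv_disjoint //; apply/capv_idPl.
move/(congr1 (@dimv _ _)).
rewrite !dim_prodv_disjoint ?(subv_trans (capvSl U W)) //.
move/eqP; rewrite eqn_pmul2r ?adim_gt0 // => /eqP dimUW.
have defU : (U :&: W)%VS = U by apply/eqP; rewrite eqEdim capvSl dimUW leqnn.
by rewrite -defU capvSr.
Qed.

Lemma prodv_bigcap_disjoint (I : finType) (P : pred I) (Us : I -> {vspace Om}) i0 :
    P i0 -> (forall i, P i -> Us i <= G)%VS ->
  ((\bigcap_(i | P i) Us i) * F)%VS = (\bigcap_(i | P i) (Us i * F))%VS.
Proof.
move=> Pi0 sUsG; rewrite !(bigD1 i0 Pi0) /=.
have sU0G := sUsG i0 Pi0.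
have capvACA : interchange (@capv _ Om) capv := Monoid.mulmACA _.
apply: (big_ind2 (fun X Y => (Us i0 :&: X) * F = Us i0 * F :&: Y)%VS).
- by rewrite !capvf.
- move=> X1 Y1 X2 Y2 eq1 eq2.
  rewrite -[in LHS](capvv (Us i0)) -[in RHS](capvv (Us i0 * F)%VS).
  rewrite [in LHS]capvACA [in RHS]capvACA -eq1 -eq2.
  by rewrite prodv_capv_disjoint ?(subv_trans (capvSl _ _) sU0G).
- by move=> i /andP[Pi _]; rewrite prodv_capv_disjoint ?sUsG.
Qed.

End LinearlyDisjoint.

Section Embeddings.

Variables (K : fieldType) (Om : splittingFieldType K).
Implicit Types (L M N : {subfield Om}) (s : gal_of {:Om}).

Lemma mem_gal_base s : s \in 'Gal({:Om} / 1)%g.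
Proof.
rewrite gal_kHom ?sub1v //; apply/kAHomP => _ /vlineP[k ->].
by rewrite linearZ /= rmorph1.
Qed.

Lemma limg_gal1 (V : {vspace Om}) : ((1%g : gal_of {:Om}) @: V)%VS = V.
Proof. by rewrite -[RHS]lim1g; apply: eq_in_limg => a _; rewrite gal_id lfunE. Qed.

Lemma limg_gal_normalField s N : normalField 1 N -> (s @: N)%VS = N.
Proof.
move=> nN; have sAut : kAut 1 {:Om} s by rewrite -gal_kAut ?sub1v ?mem_gal_base.
have sKNOm : (1 <= N <= {:Om})%VS by rewrite sub1v subvf.
by have /andP[_ /eqP] := normalField_kAut sKNOm nN sAut.
Qed.

Lemma iso_subfieldP M L E :
  iso_subfield M L E <-> (E <= M)%VS /\ exists s, (s @: L)%VS = E.
Proof.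
split=> [[sEM [f [homf defE]]] | [sEM [s defE]]]; split=> //.
  have sKLOm : (1 <= L <= {:Om})%VS by rewrite sub1v subvf.
  have [s _ Dfs] := kHom_to_gal sKLOm (normalFieldf 1) homf.
  by exists s; rewrite -defE (eq_in_limg Dfs).
exists (s : 'End(Om)); split=> //.
by apply: kHomSr (subvf L) _; rewrite -gal_kHom ?sub1v ?mem_gal_base.
Qed.

Definition gal_embeddings (M L : {vspace Om}) : {set gal_of {:Om}} :=
  [set s : gal_of {:Om} | (s @: L <= M)%VS].

Lemma is_indicium_gal M L : (L <= M)%VS ->
  is_indicium M L (\dim (\bigcap_(s in gal_embeddings M L) (s @: L))).
Proof.
move=> sLM; right; split.
  by exists L; apply/iso_subfieldP; split=> //; exists 1%g; rewrite limg_gal1.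
exists (\bigcap_(s in gal_embeddings M L) (s @: L))%VS; split=> // x; split.
  move=> xV E /iso_subfieldP[sEM [s defE]]; rewrite -defE.
  by move: xV; rewrite !memvE => /subv_bigcapP; apply; rewrite inE defE.
move=> xE; rewrite memvE; apply/subv_bigcapP => s; rewrite inE => sLsM.
rewrite -memvE; apply: (xE (s @: L)%AS).
by apply/iso_subfieldP; split=> //; exists s.
Qed.

End Embeddings.

Theorem mainTheorem6 (K : fieldType) (Om : splittingFieldType K)
  (hK : perfect_field K) (L M F L' M' : {subfield Om})
  (hLM : (L <= M)%VS)
  (hM' : strong_cluster_magnification M F M')
  (hL' : strong_cluster_magnification L F L') :
  exists t : nat, is_indicium M L t /\ is_indicium M' L' (\dim F * t)%N.
Proof.
case: hM' => _ galF [G [[galG sMG _] capGF]] <-{M'}.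
case: hL' => _ _ _ <-{L'}.
have [/and3P[_ _ nF] /and3P[_ _ nG]] := (galF, galG).
have sLsG (s : gal_of {:Om}) : (s @: L <= G)%VS.
  by rewrite -(limg_gal_normalField s nG) limgS // (subv_trans hLM sMG).
have galLF (s : gal_of {:Om}) : (s @: (L * F))%VS = (s @: L * F)%VS.
  by rewrite aimgM (limg_gal_normalField s nF).
have embLF : gal_embeddings (M * F) (L * F) = gal_embeddings M L.
  by apply/setP => s; rewrite !inE galLF (subv_prodv_disjoint galF capGF).
have emb1 : 1%g \in gal_embeddings M L by rewrite inE limg_gal1.
exists (\dim (\bigcap_(s in gal_embeddings M L) (s @: L))).
split; first exact: is_indicium_gal.
have := @is_indicium_gal _ _ (M * F)%AS (L * F)%AS (prodvSl F hLM).
rewrite embLF (eq_bigr _ (fun s _ => galLF s)).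
rewrite -(prodv_bigcap_disjoint galF capGF emb1) => [|s _]; last exact: sLsG.
by rewrite (dim_prodv_disjoint galF capGF) 1?mulnC // (bigcapv_inf _ emb1) ?sLsG.
Qed.
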